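(* Let $\pi_+\in(0,1)$, $\pi_-=1-\pi_+$, $p_+,p_-$ probability densities on $\mathcal{X}$, $\ell:\mathbb{R}\times\{+1,-1\}\to\mathbb{R}_+$ a loss and $f:\mathcal{X}\to\mathbb{R}$. Let $$\widetilde{p}_+(\boldsymbol{x})=\frac{\pi_+p_+(\boldsymbol{x})+\pi_-^2p_-(\boldsymbol{x})}{\pi_-^2+\pi_+},\qquad \widetilde{p}_-(\boldsymbol{x})=\frac{\pi_+^2p_+(\boldsymbol{x})+\pi_-p_-(\boldsymbol{x})}{\pi_+^2+\pi_-}.$$ For densities $p_{\mathrm{tr}},p_{\mathrm{tr}'}$ and numbers $\theta\ne\theta'$ define $$R_{\mathrm{UU}}(f)=\mathbb{E}_{p_{\mathrm{tr}}(\boldsymbol{x})}\Big[\frac{(1-\theta')\pi_+}{\theta-\theta'}\ell(f(\boldsymbol{x}),+1)-\frac{\theta'(1-\pi_+)}{\theta-\theta'}\ell(f(\boldsymbol{x}),-1)\Big]+\mathbb{E}_{p_{\mathrm{tr}'}(\boldsymbol{x}')}\Big[\frac{\theta(1-\pi_+)}{\theta-\theta'}\ell(f(\boldsymbol{x}'),-1)-\frac{(1-\theta)\pi_+}{\theta-\theta'}\ell(f(\boldsymbol{x}'),+1)\Big].$$ If $p_{\mathrm{tr}}=\widetilde{p}_+$, $p_{\mathrm{tr}'}=\widetilde{p}_-$, $\theta=\pi_+/(1-\pi_++\pi_+^2)$ and $\theta'=\pi_+^2/(1-\pi_++\pi_+^2)$, then $R_{\mathrm{UU}}(f)=R_{\mathrm{PC}}(f)$,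 where $$R_{\mathrm{PC}}(f)=\mathbb{E}_{\widetilde{p}_+(\boldsymbol{x})}\big[\ell(f(\boldsymbol{x}),+1)-\pi_+\ell(f(\boldsymbol{x}),-1)\big]+\mathbb{E}_{\widetilde{p}_-(\boldsymbol{x}')}\big[\ell(f(\boldsymbol{x}'),-1)-\pi_-\ell(f(\boldsymbol{x}'),+1)\big].$$
   Context: $R_{\mathrm{UU}}$ is the unbiased risk estimator for learning from two unlabeled datasets with class priors $\theta,\theta'$ and marginal densities $p_{\mathrm{tr}},p_{\mathrm{tr}'}$; $\widetilde{p}_\pm$ are the marginals of the two components of pairwise comparison data in a binary problem with class priors $\pi_\pm$ and class-conditional densities $p_\pm$. *)

From HB Require Import structures.
From mathcomp Require Import all_boot all_order all_algebra.
From mathcomp Require Import all_classical all_reals all_analysis.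
Set Implicit Arguments. Unset Strict Implicit. Unset Printing Implicit Defensive.
Import Order.TTheory GRing.Theory Num.Theory.
Local Open Scope classical_set_scope.
Local Open Scope ring_scope.

Inductive label := Pos | Neg.

Section defs.
Context {d : measure_display} {T : measurableType d} {R : realType}.
Variable mu : {measure set T -> \bar R}.

Definition is_density (p : T -> R) : Prop :=
  (forall x, 0 <= p x) /\ measurable_fun setT p /\
  (\int[mu]_x (p x)%:E = 1)%E.

Definition expect (p g : T -> R) : R := Rintegral mu setT (fun x => p x * g x).

(* marginals of pairwise comparison data; pip = pi_+, pi_- = 1 - pi_+ *)
Definition ptilde_pos (pip : R) (ppos pneg : T -> R) (x : T) : R :=
  (pip * ppos x + (1 - pip) ^+ 2 * pneg x) / ((1 - pip) ^+ 2 + pip).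
Definition ptilde_neg (pip : R) (ppos pneg : T -> R) (x : T) : R :=
  (pip ^+ 2 * ppos x + (1 - pip) * pneg x) / (pip ^+ 2 + (1 - pip)).

Definition R_UU (pip theta theta' : R) (ptr ptr' : T -> R)
    (loss : R -> label -> R) (f : T -> R) : R :=
  expect ptr (fun x =>
    (1 - theta') * pip / (theta - theta') * loss (f x) Pos
    - theta' * (1 - pip) / (theta - theta') * loss (f x) Neg)
  + expect ptr' (fun x =>
    theta * (1 - pip) / (theta - theta') * loss (f x) Neg
    - (1 - theta) * pip / (theta - theta') * loss (f x) Pos).

Definition R_PC (pip : R) (ppos pneg : T -> R)
    (loss : R -> label -> R) (f : T -> R) : R :=
  expect (ptilde_pos pip ppos pneg) (fun x => loss (f x) Pos - pip * loss (f x) Neg)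
  + expect (ptilde_neg pip ppos pneg) (fun x => loss (f x) Neg - (1 - pip) * loss (f x) Pos).

End defs.

From HB Require Import structures.
From mathcomp Require Import all_boot all_order all_algebra.
From mathcomp Require Import all_classical all_reals all_analysis.
Import Order.TTheory GRing.Theory Num.Theory.
Local Open Scope classical_set_scope.
Local Open Scope ring_scope.
From mathcomp Require Import ring lra.

(* With theta = pi_+ / D and theta' = pi_+^2 / D, where D = 1 - pi_+ + pi_+^2,
   we get theta - theta' = pi_+ pi_- / D, and the four class-prior weights of
   the UU risk collapse to 1, pi_+, 1 and pi_-.  The two risks then have the
   same integrands, so no integrability argument is needed. *)

Section pairwise_comparison_thetas.
Variables (R : realFieldType) (pip : R).
Hypotheses (pip_neq0 : pip != 0) (pip_neq1 : 1 - pip != 0).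

Local Notation D := (1 - pip + pip ^+ 2).
Local Notation theta := (pip / D).
Local Notation theta' := (pip ^+ 2 / D).

Lemma pc_denom_gt0 : 0 < D.
Proof. nra. Qed.

Let D_neq0 : D != 0. Proof. by rewrite gt_eqF ?pc_denom_gt0. Qed.

Lemma pc_theta_diff : theta - theta' = pip * (1 - pip) / D.
Proof. by field. Qed.

Lemma pc_weight_pos_tr : (1 - theta') * pip / (theta - theta') = 1.
Proof. by rewrite pc_theta_diff; field; rewrite pip_neq0 pip_neq1 D_neq0. Qed.

Lemma pc_weight_neg_tr : theta' * (1 - pip) / (theta - theta') = pip.
Proof. by rewrite pc_theta_diff; field; rewrite pip_neq0 pip_neq1 D_neq0. Qed.

Lemma pc_weight_neg_tr' : theta * (1 - pip) / (theta - theta') = 1.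
Proof. by rewrite pc_theta_diff; field; rewrite pip_neq0 pip_neq1 D_neq0. Qed.

Lemma pc_weight_pos_tr' : (1 - theta) * pip / (theta - theta') = 1 - pip.
Proof. by rewrite pc_theta_diff; field; rewrite pip_neq0 pip_neq1 D_neq0. Qed.

End pairwise_comparison_thetas.

Lemma R_UU_pc_thetas (d : measure_display) (T : measurableType d)
    (R : realType) (mu : {measure set T -> \bar R}) (pip : R)
    (ptr ptr' : T -> R) (loss : R -> label -> R) (f : T -> R) :
  pip != 0 -> 1 - pip != 0 ->
  R_UU mu pip (pip / (1 - pip + pip ^+ 2)) (pip ^+ 2 / (1 - pip + pip ^+ 2))
    ptr ptr' loss f
  = expect mu ptr (fun x => loss (f x) Pos - pip * loss (f x) Neg)
    + expect mu ptr' (fun x => loss (f x) Neg - (1 - pip) * loss (f x) Pos).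
Proof.
move=> pip0 pip1; rewrite /R_UU.
rewrite pc_weight_pos_tr // pc_weight_neg_tr // pc_weight_neg_tr' //.
rewrite pc_weight_pos_tr' //.
by congr (_ + _); congr expect; apply: funext => x; rewrite mul1r.
Qed.

Theorem corollary1 (d : measure_display) (T : measurableType d) (R : realType)
  (mu : {measure set T -> \bar R}) (pip : R) (ppos pneg : T -> R)
  (loss : R -> label -> R) (f : T -> R) :
  0 < pip < 1 ->
  is_density mu ppos -> is_density mu pneg ->
  (forall y c, 0 <= loss y c) ->
  (forall c, mu.-integrable setT (fun x => (ppos x * loss (f x) c)%:E)) ->
  (forall c, mu.-integrable setT (fun x => (pneg x * loss (f x) c)%:E)) ->
  R_UU mu pip (pip / (1 - pip + pip ^+ 2)) (pip ^+ 2 / (1 - pip + pip ^+ 2))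
    (ptilde_pos pip ppos pneg) (ptilde_neg pip ppos pneg) loss f
  = R_PC mu pip ppos pneg loss f.
Proof.
move=> /andP[pip_gt0 pip_lt1] _ _ _ _ _.
by rewrite R_UU_pc_thetas ?gt_eqF ?subr_gt0.
Qed.
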